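(* For every instance such that $|S_2|=0$ and $\pi_1+\pi_3+\pi_4-1=0$, we have $H^{PW''}\le \tfrac{3}{2}H^*$.
   Context: An instance consists of an integer $n\ge 1$ and growth rates $1=h(1)\ge h(2)\ge\cdots\ge h(n)>0$ of bamboos $b_1,\dots,b_n$. Bamboo Garden Trimming (discrete version): - All heights are $0$ initially. - On each day $t=1,2,\dots$ every bamboo $b_j$ grows by $h(j)$. - At the end of each day the gardener cuts exactly one bamboo $\sigma(t)\in\{1,\dots,n\}$ back to height $0$. The height of a schedule $\sigma:\mathbb{N}\to\{1,\dots,n\}$ is the supremum, over all days $t$ and all $j$, of the height of $b_j$ at the end of day $t$ just before the cut. $H^*$ denotes the infimum of this height over all schedules. Value of algorithm PW'': - Split $\{1,\dots,n\}$ into four sets: - $S_1=\{j: \tfrac23<h(j)\le 1\}$; - $S_2=\{j:\tfrac12<h(j)\le\tfrac23\}$; - $S_3=\{j: h(j)\le\tfrac12 \text{ and } \tfrac23 2^{-k}<h(j)\le 2^{-k}\text{ for some integer }k\ge1\}$; - $S_4=\{j: h(j)\le\tfrac12\text{ and } 2^{-(k+1)}<h(j)\le \tfrac23 2^{-k}\text{ for some integer }k\ge 1\}$. - Modified growths: $h''(j)=2^{-k}$ for $j\in S_3$ and $h''(j)=\tfrac23 2^{-k}$ for $j\in S_4$, with $k$ as in the definition of the set. - Let $\pi_1=|S_1|$, $sh_3=\sum_{j\in S_3}h''(j)$, $sh_4=\sum_{j\in S_4}h''(j)$, $\pi_3=\lfloor sh_3\rfloor$, $\pi_4=\lfloor sh_4\rfloor$,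 $f_3=sh_3-\pi_3$, $f_4=sh_4-\pi_4$. - Option (a): $\pi_R(a)=\lceil f_3+f_4\rceil$ and $z(a)=\pi_1+|S_2|+\pi_3+\pi_4+\pi_R(a)$. - Option (b): if $S_2=\emptyset$ put $z(b)=+\infty$. Otherwise let $h^*=\max_{j\in S_2}h(j)$ and $f_2=\tfrac12$ if $|S_2|$ is odd, $f_2=0$ if $|S_2|$ is even. Then $\pi_R(b)=\lceil f_2+f_3+f_4\rceil$ and $z(b)=2h^*\,(\pi_1+\lfloor |S_2|/2\rfloor+\pi_3+\pi_4+\pi_R(b))$. - The value returned by algorithm PW'' is $H^{PW''}=\min\{z(a),z(b)\}$. The paper takes this as the maximum height of the periodic pinwheel trimming schedule that it builds from these partitions. *)

From Stdlib Require Import Reals Lra Lia Arith.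
Open Scope R_scope.

(** Bamboos are indexed 1..n; growth rates h : nat -> R (values outside 1..n unused). *)

Definition instance (n : nat) (h : nat -> R) : Prop :=
  (1 <= n)%nat /\ h 1%nat = 1 /\
  (forall j, (1 <= j < n)%nat -> h (S j) <= h j) /\
  0 < h n.

(* A schedule: sigma t is the bamboo cut at the end of day t (days t >= 1). *)
Definition valid_schedule (n : nat) (sigma : nat -> nat) : Prop :=
  forall t, (1 <= sigma t <= n)%nat.

(* Height of bamboo j at the end of day t, after the cut of day t (day 0 = start). *)
Fixpoint after_cut (h : nat -> R) (sigma : nat -> nat) (j : nat) (t : nat) : R :=
  match t with
  | O => 0
  | S t' => if Nat.eqb (sigma t) j then 0 else after_cut h sigma j t' + h j
  end.

(* Height of bamboo j at the end of day t (t >= 1), just before the cut. *)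
Definition before_cut (h : nat -> R) (sigma : nat -> nat) (j t : nat) : R :=
  after_cut h sigma j (pred t) + h j.

Definition heights (n : nat) (h : nat -> R) (sigma : nat -> nat) (x : R) : Prop :=
  exists t j, (1 <= t)%nat /\ (1 <= j <= n)%nat /\ x = before_cut h sigma j t.

Definition is_glb (E : R -> Prop) (m : R) : Prop :=
  (forall x, E x -> m <= x) /\ (forall m', (forall x, E x -> m' <= x) -> m' <= m).

(* Hs is the height (supremum) of some schedule; schedules with unbounded
   heights have height +infinity and hence do not affect the infimum. *)
Definition schedule_height_value (n : nat) (h : nat -> R) (Hs : R) : Prop :=
  exists sigma, valid_schedule n sigma /\ is_lub (heights n h sigma) Hs.

Definition is_optimal_height (n : nat) (h : nat -> R) (Hstar : R) : Prop :=
  is_glb (schedule_height_value n h) Hstar.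

Definition floorZ (x : R) : Z := Int_part x.
Definition ceilZ (x : R) : Z := (- Int_part (- x))%Z.

Fixpoint sumR (f : nat -> R) (n : nat) : R :=
  match n with O => 0 | S m => sumR f m + f n end.
Fixpoint countN (p : nat -> bool) (n : nat) : nat :=
  match n with O => O | S m => (countN p m + (if p n then 1 else 0))%nat end.
(* maximum of f j over j in 1..n with p j (0 if none) *)
Fixpoint maxR (p : nat -> bool) (f : nat -> R) (n : nat) : R :=
  match n with O => 0 | S m => if p n then Rmax (maxR p f m) (f n) else maxR p f m end.

(* For 0 < x <= 1/2, level x is the unique k >= 1 with 2^-(k+1) < x <= 2^-k,
   i.e. k = floor(log2(1/x)). *)
Definition level (x : R) : nat := Z.to_nat (Int_part (- ln x / ln 2)).

Definition pow2neg (k : nat) : R := (/ 2) ^ k.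

Definition inS1 (x : R) : bool := if Rlt_dec (2/3) x then true else false.
Definition inS2 (x : R) : bool :=
  if Rlt_dec (1/2) x then (if Rle_dec x (2/3) then true else false) else false.
Definition inS3 (x : R) : bool :=
  if Rle_dec x (1/2) then
    (if Rlt_dec (2/3 * pow2neg (level x)) x then true else false) else false.
Definition inS4 (x : R) : bool :=
  if Rle_dec x (1/2) then
    (if Rle_dec x (2/3 * pow2neg (level x)) then true else false) else false.

Definition h3 (x : R) : R := pow2neg (level x).
Definition h4 (x : R) : R := 2/3 * pow2neg (level x).

Section PW.
Variables (n : nat) (h : nat -> R).

Definition pi1 : nat := countN (fun j => inS1 (h j)) n.
Definition card_S2 : nat := countN (fun j => inS2 (h j)) n.
Definition sh3 : R := sumR (fun j => if inS3 (h j) then h3 (h j) else 0) n.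
Definition sh4 : R := sumR (fun j => if inS4 (h j) then h4 (h j) else 0) n.
Definition pi3 : Z := floorZ sh3.
Definition pi4 : Z := floorZ sh4.
Definition f3 : R := sh3 - IZR pi3.
Definition f4 : R := sh4 - IZR pi4.

Definition z_a : R :=
  INR pi1 + INR card_S2 + IZR pi3 + IZR pi4 + IZR (ceilZ (f3 + f4)).

Definition h_star_S2 : R := maxR (fun j => inS2 (h j)) h n.
Definition f2 : R := if Nat.odd card_S2 then 1/2 else 0.
(* z(b), meaningful when S2 is nonempty *)
Definition z_b : R :=
  2 * h_star_S2 *
  (INR pi1 + INR (Nat.div2 card_S2) + IZR pi3 + IZR pi4 + IZR (ceilZ (f2 + f3 + f4))).

(* H^{PW''} = min{z(a), z(b)} with z(b) = +infinity when S2 is empty *)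
Definition H_PW : R := if Nat.eqb card_S2 0 then z_a else Rmin z_a z_b.

End PW.

From Stdlib Require Import Reals.
From Stdlib Require Import Lra Lia ZArith.
Open Scope R_scope.

(* Under the hypotheses, S_2 is empty and pi_1 + pi_3 + pi_4 = 1, so
   H^{PW''} = 1 + ceil(f_3 + f_4) with f_3, f_4 fractional parts; hence
   H^{PW''} <= 3, and H^{PW''} = 1 for a single bamboo.  On the other side,
   every schedule has height at least h(1) = 1, and at least 2 as soon as
   there is a second bamboo: a schedule of height < 2 must cut b_1 every day
   (b_1 reaches 2 one day after being skipped), so b_2 is never cut and grows
   without bound.  Thus H^* >= 2 whenever H^{PW''} > 1. *)

Lemma ceilZ_le_of_lt (x : R) (m : Z) : x < IZR m -> (ceilZ x <= m)%Z.
Proof.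
  intro Hx. unfold ceilZ. destruct (base_Int_part (- x)) as [_ Hgt].
  assert (Hm : (- m - 1 < Int_part (- x))%Z).
  { apply lt_IZR. rewrite minus_IZR, opp_IZR. lra. }
  lia.
Qed.

Lemma Int_part_0 : Int_part 0 = 0%Z.
Proof. exact (Int_part_INR 0). Qed.

Lemma ceilZ_0 : ceilZ 0 = 0%Z.
Proof. unfold ceilZ. now rewrite Ropp_0, Int_part_0. Qed.

Lemma f3_plus_f4_lt_2 (n : nat) (h : nat -> R) : f3 n h + f4 n h < 2.
Proof.
  pose proof (base_fp (sh3 n h)). pose proof (base_fp (sh4 n h)).
  unfold f3, f4, pi3, pi4, floorZ, frac_part in *. lra.
Qed.

Lemma H_PW_no_S2 (n : nat) (h : nat -> R) :
  card_S2 n h = 0%nat ->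
  (Z.of_nat (pi1 n h) + pi3 n h + pi4 n h = 1)%Z ->
  H_PW n h = 1 + IZR (ceilZ (f3 n h + f4 n h)).
Proof.
  intros HS2 Hpi. unfold H_PW, z_a. rewrite HS2. simpl Nat.eqb; cbv iota.
  rewrite INR_IZR_INZ. simpl INR. rewrite Rplus_0_r, <- !plus_IZR, Hpi. ring.
Qed.

Lemma H_PW_le_3 (n : nat) (h : nat -> R) :
  card_S2 n h = 0%nat ->
  (Z.of_nat (pi1 n h) + pi3 n h + pi4 n h = 1)%Z ->
  H_PW n h <= 3.
Proof.
  intros HS2 Hpi. rewrite (H_PW_no_S2 n h HS2 Hpi).
  pose proof (ceilZ_le_of_lt _ 2 (f3_plus_f4_lt_2 n h)) as Hceil.
  apply IZR_le in Hceil. lra.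
Qed.

Lemma H_PW_single (h : nat -> R) : h 1%nat = 1 -> H_PW 1 h = 1.
Proof.
  intro Hh1.
  assert (Hsh : sh3 1 h = 0 /\ sh4 1 h = 0).
  { unfold sh3, sh4, inS3, inS4; simpl. rewrite Hh1.
    destruct (Rle_dec 1 (1/2)); [lra | split; ring]. }
  assert (HS2 : card_S2 1 h = 0%nat).
  { unfold card_S2, inS2; simpl. rewrite Hh1.
    destruct (Rlt_dec (1/2) 1); [destruct (Rle_dec 1 (2/3)); [lra|]|]; reflexivity. }
  assert (Hpi1 : pi1 1 h = 1%nat).
  { unfold pi1, inS1; simpl. rewrite Hh1. destruct (Rlt_dec (2/3) 1); [reflexivity | lra]. }
  assert (Hpi3 : pi3 1 h = 0%Z) by (unfold pi3, floorZ; rewrite (proj1 Hsh); exact Int_part_0).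
  assert (Hpi4 : pi4 1 h = 0%Z) by (unfold pi4, floorZ; rewrite (proj2 Hsh); exact Int_part_0).
  rewrite H_PW_no_S2 by (rewrite ?Hpi1, ?Hpi3, ?Hpi4; reflexivity || assumption).
  unfold f3, f4. rewrite Hpi3, Hpi4, (proj1 Hsh), (proj2 Hsh).
  replace (0 - IZR 0 + (0 - IZR 0)) with 0 by (simpl; ring).
  rewrite ceilZ_0. simpl. ring.
Qed.

Lemma after_cut_ge0 (h : nat -> R) (sigma : nat -> nat) (j t : nat) :
  0 <= h j -> 0 <= after_cut h sigma j t.
Proof. intro Hj; induction t; simpl; [lra | destruct (Nat.eqb _ _); lra]. Qed.

Lemma after_cut_never_cut (h : nat -> R) (sigma : nat -> nat) (j t : nat) :
  (forall s, (1 <= s <= t)%nat -> sigma s <> j) ->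
  after_cut h sigma j t = INR t * h j.
Proof.
  induction t as [|t IH]; intro Hcut; simpl after_cut; [simpl; ring|].
  rewrite (proj2 (Nat.eqb_neq _ _)) by (apply Hcut; lia).
  rewrite IH by (intros s Hs; apply Hcut; lia). rewrite S_INR. ring.
Qed.

Lemma before_cut_skipped (h : nat -> R) (sigma : nat -> nat) (j t : nat) :
  0 <= h j -> (1 <= t)%nat -> sigma t <> j ->
  2 * h j <= before_cut h sigma j (S t).
Proof.
  intros Hj Ht Hskip. destruct t as [|t]; [lia|].
  unfold before_cut. simpl pred. simpl after_cut.
  rewrite (proj2 (Nat.eqb_neq _ _) Hskip).
  pose proof (after_cut_ge0 h sigma j t Hj). lra.
Qed.

Lemma instance_rate_pos (n : nat) (h : nat -> R) (j : nat) :
  instance n h -> (1 <= j <= n)%nat -> 0 < h j.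
Proof.
  intros [_ [_ [Hmono Hpos]]] Hjn.
  assert (Hdown : forall k, (k < n)%nat -> 0 < h (n - k)%nat).
  { induction k as [|k IH]; intro Hk; [now rewrite Nat.sub_0_r|].
    pose proof (Hmono (n - S k)%nat ltac:(lia)) as Hstep.
    replace (S (n - S k)) with (n - k)%nat in Hstep by lia.
    specialize (IH ltac:(lia)). lra. }
  replace j with (n - (n - j))%nat by lia. apply Hdown. lia.
Qed.

Lemma schedule_height_ge_1 (n : nat) (h : nat -> R) (sigma : nat -> nat) (x : R) :
  instance n h -> is_lub (heights n h sigma) x -> 1 <= x.
Proof.
  intros [Hn [Hh1 _]] [Hub _]. apply Hub. exists 1%nat, 1%nat.
  split; [lia | split; [lia|]]. unfold before_cut; simpl. rewrite Hh1. ring.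
Qed.

Lemma schedule_height_ge_2 (n : nat) (h : nat -> R) (sigma : nat -> nat) (x : R) :
  instance n h -> (2 <= n)%nat -> is_lub (heights n h sigma) x -> 2 <= x.
Proof.
  intros Hinst Hn [Hub _]. pose proof Hinst as [_ [Hh1 _]].
  assert (Hreach : forall j t, (1 <= j <= n)%nat -> before_cut h sigma j (S t) <= x).
  { intros j t Hj. apply Hub. exists (S t), j. repeat split; lia. }
  assert (Hh2 : 0 < h 2%nat) by (apply (instance_rate_pos n); auto; lia).
  destruct (Rle_lt_dec 2 x) as [Hx|Hx]; [exact Hx | exfalso].
  assert (Hcut1 : forall t, (1 <= t)%nat -> sigma t = 1%nat).
  { intros t Ht. destruct (Nat.eq_dec (sigma t) 1) as [E|Hskip]; [exact E|].
    pose proof (before_cut_skipped h sigma 1 t ltac:(lra) Ht Hskip).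
    pose proof (Hreach 1%nat t ltac:(lia)). lra. }
  destruct (INR_archimed (h 2%nat) x ltac:(lra)) as [t Ht].
  pose proof (Hreach 2%nat t ltac:(lia)) as Hb.
  unfold before_cut in Hb. simpl pred in Hb.
  rewrite after_cut_never_cut in Hb by (intros s Hs; rewrite Hcut1; lia).
  lra.
Qed.

Theorem proposition8 (n : nat) (h : nat -> R) (Hstar : R) :
  instance n h ->
  card_S2 n h = 0%nat ->
  (Z.of_nat (pi1 n h) + pi3 n h + pi4 n h - 1 = 0)%Z ->
  is_optimal_height n h Hstar ->
  H_PW n h <= 3 / 2 * Hstar.
Proof.
  intros Hinst HS2 Hpi [_ Hglb].
  pose proof Hinst as [Hn [Hh1 _]].
  destruct (Nat.eq_dec n 1) as [->|Hn2].
  - assert (Hstar1 : 1 <= Hstar).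
    { apply Hglb. intros x [sigma [_ Hlub]]. exact (schedule_height_ge_1 _ _ _ _ Hinst Hlub). }
    rewrite H_PW_single by exact Hh1. lra.
  - assert (Hstar2 : 2 <= Hstar).
    { apply Hglb. intros x [sigma [_ Hlub]].
      exact (schedule_height_ge_2 _ _ _ _ Hinst ltac:(lia) Hlub). }
    pose proof (H_PW_le_3 n h HS2 ltac:(lia)). lra.
Qed.
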